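(* Let $\mathcal D$ be a mesh triplet and $\mu,\lambda$ parameter fields as in the context, and suppose the local coercivity assumption holds with constant $\theta_2>0$. Let $c_K$, $c_{\mathcal D}$, $c_{L^2}$ be constants as in the context. Then (a) if $\Gamma_D$ has positive measure, for all $\boldsymbol u\in\boldsymbol{\mathcal H}_{\mathcal T}$, and (b) if $\Gamma_N=\partial\Omega$, for all $\boldsymbol u\in\boldsymbol{\mathcal H}_{\mathcal T}/\mathfrak R(\Omega)$, $$b_{\mathcal D}\big(\Pi_{FV}\boldsymbol u,\Pi_{\mathcal C}(\Pi_{FV}\boldsymbol u)\big)\ge\Theta\,|\boldsymbol u|_{\mathcal T}^2,$$ where the constant $\Theta$ depends on the mesh triplet $\mathcal D$ but does not scale with $h$, and is bounded below by $$\Theta\ge\frac{\theta_2}{d\,c_{\mathcal D}\,c_K(1+c_{L^2})}\min\Big(2\underline\mu,\ \frac{1}{1+(c_K(1+c_{L^2}))^{-1}}\Big).$$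
   Context: Let $\Omega\subset\mathbb R^d$, $d\in\{2,3\}$, be a bounded connected polygonal domain with $\partial\Omega=\Gamma_D\cup\Gamma_N$; $\mathfrak R(\Omega)=\{\boldsymbol a+\boldsymbol\omega\wedge\boldsymbol x\}$ are the rigid body motions and $\|\cdot\|_{L^2/\mathfrak R(\Omega)}$ the corresponding quotient norm. Lamé parameters: $0<\underline\mu\le\mu\le\bar\mu$ a.e., $\lambda$ bounded and positive; $\mu_K=m_K^{-1}\int_K\mu$, $\lambda_K=m_K^{-1}\int_K\lambda$. Mesh triplet $\mathcal D=(\mathcal T,\mathcal F,\mathcal V)$: cells $K$ (measure $m_K$, center $\boldsymbol x_K$, $K$ star-shaped w.r.t. $\boldsymbol x_K$; $h$ the maximal cell diameter), planar faces $\sigma$ (measure $m_\sigma$), vertices $s$; $\mathcal F_K,\mathcal V_K$ faces/vertices of $K$; $\mathcal T_\sigma$ the one or two cells adjacent to $\sigma$; $\mathcal T_s,\mathcal F_s$ cells/faces adjacent to $s$; in 3D at most three faces meet at a vertex. Subcells $(K,s)$ have volumes $m_K^s$, $\sum_sm_K^s=m_K$; subfaces $(s,\sigma)$ have areas $m_\sigma^s=m_s^\sigma$. $\boldsymbol n_{K,\sigma}$ outward unit normal; $d_{K,\sigma}$ distance from $\boldsymbol x_K$ to $\sigma$. $\mathcal G_\sigma^s$: minimal Gauss rule (points $\boldsymbol x_\beta$, weights $\omega_\beta$) exact for quadratics on subface $(s,\sigma)$. Spaces: $\boldsymbol{\mathcal H}_{\mathcal T}$ piecewise constant vector fields (values $\boldsymbol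 u_K$); $\boldsymbol{\mathcal H}_{\mathcal D}$ collections $(\boldsymbol u_K,\boldsymbol u_{K,s}^{\sigma,\beta})$, $K\in\mathcal T,s\in\mathcal V_K,\sigma\in\mathcal F_K\cap\mathcal F_s,\beta\in\mathcal G_\sigma^s$, zero on faces in $\Gamma_D$; $\boldsymbol{\mathcal H}_{\mathcal C}$ collections $(\boldsymbol u_K,\boldsymbol u_s^\sigma)$, one value per subface, zero on $\Gamma_D$. Jump $[\![\boldsymbol u]\!]_s^{\sigma,\beta}=\boldsymbol u_{R,s}^{\sigma,\beta}-\boldsymbol u_{L,s}^{\sigma,\beta}$ ($\mathcal T_\sigma=\{R,L\}$), zero on boundary faces; averages $\langle\boldsymbol u\rangle_s^\sigma=\frac1{m_s^\sigma}\sum_\beta\omega_\beta\frac{\boldsymbol u_{R,s}^{\sigma,\beta}+\boldsymbol u_{L,s}^{\sigma,\beta}}2$ (one-sided on boundary faces) and $\langle\boldsymbol u\rangle_{K,s}^\sigma=\frac1{m_s^\sigma}\sum_\beta\omega_\beta\boldsymbol u_{K,s}^{\sigma,\beta}$. $\Pi_{\mathcal C}:\boldsymbol{\mathcal H}_{\mathcal D}\to\boldsymbol{\mathcal H}_{\mathcal C}$: $(\Pi_{\mathcal C}\boldsymbol u)_K=\boldsymbol u_K$, $(\Pi_{\mathcal C}\boldsymbol u)_s^\sigma=\langle\boldsymbol u\rangle_s^\sigma$. Semi-norms: $|\boldsymbol u|_{\mathcal T}^2=\sum_K\sum_{\sigma\in\mathcal F_K}\frac{m_\sigma}{d_{K,\sigma}}|\gamma_\sigma\boldsymbol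 u-\boldsymbol u_K|^2$, where $\gamma_\sigma\boldsymbol u=\big(\sum_{K\in\mathcal T_\sigma}\boldsymbol u_K/d_{K,\sigma}\big)/\big(\sum_{K\in\mathcal T_\sigma}d_{K,\sigma}^{-1}\big)$ for $\sigma\not\subset\Gamma_D$ and $\gamma_\sigma\boldsymbol u=\boldsymbol 0$ for $\sigma\subset\Gamma_D$. $|\boldsymbol u|_{\mathcal D}^2=\sum_K\sum_{s\in\mathcal V_K}\sum_{\sigma\in\mathcal F_s\cap\mathcal F_K}\frac{m_K^s}{d_{K,\sigma}^2}\big(|\boldsymbol u_K-\langle\boldsymbol u\rangle_s^\sigma|^2+\frac1{m_s^\sigma}\sum_\beta\omega_\beta|[\![\boldsymbol u]\!]_s^{\sigma,\beta}|^2\big)$. Jump functional $J(\boldsymbol u)=\sum_K\sum_{s\in\mathcal V_K}\sum_{\sigma\in\mathcal F_s\cap\mathcal F_K}\frac{m_K^s}{d_{K,\sigma}^2}\frac1{m_s^\sigma}\sum_\beta\omega_\beta|[\![\boldsymbol u]\!]_s^{\sigma,\beta}|^2$ and local version $J_s$ (only the terms with that $s$). Gradients: $(\widetilde\nabla\boldsymbol v)_K^s=\frac1{m_K^s}\sum_{\sigma\in\mathcal F_K\cap\mathcal F_s}m_\sigma^s(\boldsymbol v_s^\sigma-\boldsymbol v_K)\otimes\boldsymbol n_{K,\sigma}$ for $\boldsymbol v\in\boldsymbol{\mathcal H}_{\mathcal C}$; $(\overline\nabla\boldsymbol u)_K^s=\sum_{\sigma\in\mathcal F_K\cap\mathcal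 F_s}(\langle\boldsymbol u\rangle_{K,s}^\sigma-\boldsymbol u_K)\otimes\boldsymbol g_{K,\sigma}^s$ for $\boldsymbol u\in\boldsymbol{\mathcal H}_{\mathcal D}$, with $\boldsymbol g_{K,\sigma}^s$ uniquely determined by $\boldsymbol I=\sum_\sigma(\langle\boldsymbol x\rangle_{K,s}^\sigma-\boldsymbol x_K)\otimes\boldsymbol g_{K,\sigma}^s$. Symmetric parts $\widetilde\varepsilon,\overline\varepsilon$ and traces $\widetilde{\operatorname{div}},\overline{\operatorname{div}}$. $\Pi_{L^2}\boldsymbol u(\boldsymbol x)=\boldsymbol u_K+(\overline\nabla\boldsymbol u)_K^s(\boldsymbol x-\boldsymbol x_K)$ on subcell $(K,s)$. Bilinear forms: $b_{\mathcal D,s}(\boldsymbol u,\boldsymbol v)=\sum_{K\in\mathcal T_s}m_K^s\big(2\mu_K(\overline\varepsilon\boldsymbol u)_K^s:(\widetilde\varepsilon\boldsymbol v)_K^s+\lambda_K(\overline{\operatorname{div}}\boldsymbol u)_K^s(\widetilde{\operatorname{div}}\boldsymbol v)_K^s\big)$, $b_{\mathcal D}=\sum_sb_{\mathcal D,s}$; $a_{\mathcal D,s}(\boldsymbol u,\boldsymbol w)=\sum_{\sigma\in\mathcal F_s}\frac{\alpha_s^\sigma}{m_s^\sigma}\sum_\beta\omega_\beta[\![\boldsymbol u]\!]\cdot[\![\boldsymbol w]\!]$ with weights in $[\alpha^-,\alpha^+]\subset(0,\infty)$. Local energy $|\boldsymbol u|^2_{b_{\mathcal D,s}}=\sum_{K\in\mathcal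 T_s}m_K^s\big(2\mu_K|(\overline\varepsilon\boldsymbol u)_K^s|^2+\lambda_K((\overline{\operatorname{div}}\boldsymbol u)_K^s)^2\big)$. Extensions: $\Pi_{FV,s}\boldsymbol u_{\mathcal T}$ is the minimizer of $a_{\mathcal D,s}(\boldsymbol w,\boldsymbol w)$ over $\boldsymbol w\in\boldsymbol{\mathcal H}_{\mathcal D}$ with cell values $(\boldsymbol u_{\mathcal T})_K$ on $\mathcal T_s$ (zero elsewhere) and face unknowns only at $s$, subject to $b_{\mathcal D,s}(\boldsymbol w,\boldsymbol v)=0$ for all $\boldsymbol v\in\boldsymbol{\mathcal H}_{\mathcal C}$ with zero cell values and support on subfaces at $s$, and $\boldsymbol w_{K,s}^{\sigma,\beta}=\boldsymbol w_K+(\overline\nabla\boldsymbol w)_K^s(\boldsymbol x_\beta-\boldsymbol x_K)$ for all $K\in\mathcal T_s,\sigma,\beta$ (this minimizer exists and is unique). $\Pi_{FV}\boldsymbol u_{\mathcal T}\in\boldsymbol{\mathcal H}_{\mathcal D}$ has cell values $(\boldsymbol u_{\mathcal T})_K$ and at each vertex $s$ the face unknowns of $\Pi_{FV,s}\boldsymbol u_{\mathcal T}$. Local coercivity assumption: for every $s\in\mathcal V$ there is $\theta_{2,s}\ge\theta_2>0$ with $b_{\mathcal D,s}(\boldsymbol u,\Pi_{\mathcal C}\boldsymbol u)\ge\theta_{2,s}\big(|\boldsymbol u|^2_{b_{\mathcal D,s}}+J_s(\boldsymbol u)\big)$ for all $\boldsymbol u\in\Pi_{FV,s}\boldsymbol{\mathcal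 H}_{\mathcal T}/\mathfrak R(\Omega)$. Constants: $c_K$ is a constant with $\sum_K\sum_{s\in\mathcal V_K}m_K^s|(\overline\nabla\boldsymbol u)_K^s|^2\le c_K\big[\|\Pi_{L^2}\boldsymbol u\|_{L^2}^2+\sum_K\sum_sm_K^s|(\overline\varepsilon\boldsymbol u)_K^s|^2+J(\boldsymbol u)\big]$ for all $\boldsymbol u\in\Pi_{FV}\boldsymbol{\mathcal H}_{\mathcal T}$ (a discrete Korn inequality); $c_{\mathcal D}$ is a constant with $|\boldsymbol u|_{\mathcal D}^2\le c_{\mathcal D}\big(\sum_K\sum_sm_K^s|(\overline\nabla\boldsymbol u)_K^s|^2+J(\boldsymbol u)\big)$ for all $\boldsymbol u\in\boldsymbol{\mathcal H}_{\mathcal D}$; $c_{L^2}$ is a constant with $\|\Pi_{L^2}\boldsymbol u\|^2_{L^2/\mathfrak R(\Omega)}\le c_{L^2}\big(\sum_K\sum_sm_K^s|(\overline\varepsilon\boldsymbol u)_K^s|^2+J(\boldsymbol u)\big)$ for all $\boldsymbol u\in\Pi_{FV}\boldsymbol{\mathcal H}_{\mathcal T}$; all three depend only on mesh regularity, not on $h$. *)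

From HB Require Import structures.
From mathcomp Require Import all_boot all_order all_algebra.
From mathcomp Require Import all_classical all_reals.
Set Implicit Arguments. Unset Strict Implicit. Unset Printing Implicit Defensive.
Import Order.TTheory GRing.Theory Num.Theory.
Local Open Scope ring_scope.
Local Open Scope classical_set_scope.

(* Mesh triplet D = (T, F, V), described by its combinatorial and geometric   *)
(* data.  Points/vectors of R^d are row vectors.    *)
Record mesh (R : realType) (d : nat) := Mesh {
  cell : finType;
  face : finType;
  vert : finType;
  gpt  : finType;                     (* Gauss points beta (all subfaces) *)
  fc1 : face -> cell;                 (* T_sigma = {fc1 sigma; fc2 sigma} *)
  fc2 : face -> cell;                 (* (equal iff sigma is a boundary face) *)
  fverts : face -> {set vert};
  fdir : face -> bool;                (* sigma is a face contained in Gamma_D *)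
  gp_face : gpt -> face;              (* the subface (s,sigma) carrying beta *)
  gp_vert : gpt -> vert;
  gp_pt : gpt -> 'rV[R]_d;
  gp_w : gpt -> R;
  xK : cell -> 'rV[R]_d;
  mK : cell -> R;
  mS : face -> R;
  mSs : face -> vert -> R;
  mKs : cell -> vert -> R;
  dKS : cell -> face -> R;
  nKS : cell -> face -> 'rV[R]_d;
  mom1 : cell -> vert -> 'rV[R]_d;    (* int_{(K,s)} (x - x_K) dx *)
  mom2 : cell -> vert -> 'M[R]_d;     (* int_{(K,s)} (x - x_K)^T (x - x_K) dx *)
  gKS : cell -> vert -> face -> 'rV[R]_d
}.

Arguments cell {R d} m.
Arguments face {R d} m.
Arguments vert {R d} m.
Arguments gpt {R d} m.
Arguments fc1 {R d} m.
Arguments fc2 {R d} m.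
Arguments fverts {R d} m.
Arguments fdir {R d} m.
Arguments gp_face {R d} m.
Arguments gp_vert {R d} m.
Arguments gp_pt {R d} m.
Arguments gp_w {R d} m.
Arguments xK {R d} m.
Arguments mK {R d} m.
Arguments mS {R d} m.
Arguments mSs {R d} m.
Arguments mKs {R d} m.
Arguments dKS {R d} m.
Arguments nKS {R d} m.
Arguments mom1 {R d} m.
Arguments mom2 {R d} m.
Arguments gKS {R d} m.

Section Scheme.
Variables (R : realType) (d : nat) (M : mesh R d).

Local Notation cell := (cell M).
Local Notation face := (face M).
Local Notation vert := (vert M).
Local Notation gpt := (gpt M).
Local Notation vec := 'rV[R]_d.
Local Notation mat := 'M[R]_d.

Definition dotv (u v : vec) : R := \sum_(i < d) u 0 i * v 0 i.
Definition nrm2 (u : vec) : R := dotv u u.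
Definition tens (a b : vec) : mat := a^T *m b.
Definition ddot (A B : mat) : R := \sum_(i < d) \sum_(j < d) A i j * B i j.
Definition frob2 (A : mat) : R := ddot A A.
Definition symm (A : mat) : mat := 2^-1 *: (A + A^T).

Definition Tsig (s : face) : {set cell} := [set fc1 M s; fc2 M s].
Definition inc (K : cell) (s : face) : bool := K \in Tsig s.
Definition FK (K : cell) : {set face} := [set sg | inc K sg].
Definition VK (K : cell) : {set vert} := \bigcup_(sg in FK K) fverts M sg.
Definition Fs (s : vert) : {set face} := [set sg | s \in fverts M sg].
Definition Ts (s : vert) : {set cell} := [set K | s \in VK K].
Definition FKs (K : cell) (s : vert) : {set face} := FK K :&: Fs s.
Definition Gsub (s : vert) (sg : face) : {set gpt} :=
  [set b | (gp_face M b == sg) && (gp_vert M b == s)].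

Definition avgx (s : vert) (sg : face) : vec :=
  (mSs M sg s)^-1 *: \sum_(b in Gsub s sg) gp_w M b *: gp_pt M b.

Definition mesh_ok : Prop :=
  (forall sg, fdir M sg -> fc1 M sg = fc2 M sg) /\
  (forall sg, fc1 M sg != fc2 M sg -> nKS M (fc1 M sg) sg = - nKS M (fc2 M sg) sg) /\
  (forall K, 0 < mK M K) /\ (forall sg, 0 < mS M sg) /\
  (forall sg s, s \in fverts M sg -> 0 < mSs M sg s) /\
  (forall K s, s \in VK K -> 0 < mKs M K s) /\
  (forall K sg, inc K sg -> 0 < dKS M K sg /\ nrm2 (nKS M K sg) = 1) /\
  (forall b, 0 < gp_w M b /\ gp_vert M b \in fverts M (gp_face M b)) /\
  (forall sg s, s \in fverts M sg ->
      Gsub s sg != finset.set0 /\ \sum_(b in Gsub s sg) gp_w M b = mSs M sg s) /\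
  (forall sg, mS M sg = \sum_(s in fverts M sg) mSs M sg s) /\
  (forall K, mK M K = \sum_(s in VK K) mKs M K s) /\
  (* subcell (K,s) is the union of the cones of apex x_K over the
     subfaces (s,sigma), sigma in F_K cap F_s *)
  (forall K s, s \in VK K ->
     d%:R * mKs M K s = \sum_(sg in FKs K s) mSs M sg s * dKS M K sg) /\
  (forall K s, s \in VK K -> #|FKs K s| = d) /\
  (* definition of g_{K,sigma}^s *)
  (forall K s, s \in VK K ->
     \sum_(sg in FKs K s) tens (avgx s sg - xK M K) (gKS M K s sg) = 1%:M).

Definition HT := cell -> vec.
(* H_D : cell values u_K and face values u_{K,s}^{sigma,beta} (indexed by K
   and the Gauss point beta, which determines s and sigma) *)
Definition HD := ((cell -> vec) * (cell -> gpt -> vec))%type.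
Definition inHD (u : HD) : Prop :=
  (forall K b, ~~ inc K (gp_face M b) -> u.2 K b = 0) /\
  (forall K b, fdir M (gp_face M b) -> u.2 K b = 0).
(* H_C : cell values and one value per subface (s,sigma) *)
Definition HC := ((cell -> vec) * (vert -> face -> vec))%type.
Definition inHC (v : HC) : Prop :=
  (forall s sg, s \notin fverts M sg -> v.2 s sg = 0) /\
  (forall s sg, fdir M sg -> v.2 s sg = 0).

Definition jump (u : HD) (b : gpt) : vec :=
  u.2 (fc1 M (gp_face M b)) b - u.2 (fc2 M (gp_face M b)) b.
Definition avgS (u : HD) (s : vert) (sg : face) : vec :=
  (mSs M sg s)^-1 *: \sum_(b in Gsub s sg)
      gp_w M b *: (2^-1 *: (u.2 (fc1 M sg) b + u.2 (fc2 M sg) b)).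
Definition avgKS (u : HD) (K : cell) (s : vert) (sg : face) : vec :=
  (mSs M sg s)^-1 *: \sum_(b in Gsub s sg) gp_w M b *: u.2 K b.
Definition PiC (u : HD) : HC := (u.1, fun s sg => avgS u s sg).

Definition gradT (v : HC) (K : cell) (s : vert) : mat :=
  (mKs M K s)^-1 *: \sum_(sg in FKs K s)
     mSs M sg s *: tens (v.2 s sg - v.1 K) (nKS M K sg).
Definition gradB (u : HD) (K : cell) (s : vert) : mat :=
  \sum_(sg in FKs K s) tens (avgKS u K s sg - u.1 K) (gKS M K s sg).

Definition gammaS (u : HT) (sg : face) : vec :=
  if fdir M sg then 0 else
  (\sum_(K in Tsig sg) (dKS M K sg)^-1)^-1 *:
     \sum_(K in Tsig sg) (dKS M K sg)^-1 *: u K.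
Definition normT2 (u : HT) : R :=
  \sum_K \sum_(sg in FK K) mS M sg / dKS M K sg * nrm2 (gammaS u sg - u K).
Definition jterm (u : HD) (s : vert) (sg : face) : R :=
  (mSs M sg s)^-1 * \sum_(b in Gsub s sg) gp_w M b * nrm2 (jump u b).
Definition normD2 (u : HD) : R :=
  \sum_K \sum_(s in VK K) \sum_(sg in FKs K s)
     mKs M K s / dKS M K sg ^+ 2 * (nrm2 (u.1 K - avgS u s sg) + jterm u s sg).
Definition Jfun (u : HD) : R :=
  \sum_K \sum_(s in VK K) \sum_(sg in FKs K s)
     mKs M K s / dKS M K sg ^+ 2 * jterm u s sg.
Definition Jloc (u : HD) (s : vert) : R :=
  \sum_(K in Ts s) \sum_(sg in FKs K s) mKs M K s / dKS M K sg ^+ 2 * jterm u s sg.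
Definition sumGrad2 (u : HD) : R :=
  \sum_K \sum_(s in VK K) mKs M K s * frob2 (gradB u K s).
Definition sumEps2 (u : HD) : R :=
  \sum_K \sum_(s in VK K) mKs M K s * frob2 (symm (gradB u K s)).

(* bilinear forms; muK, lamK are the cell averages mu_K, lambda_K *)
Variables (muK lamK : cell -> R) (alpha : vert -> face -> R).

Definition bDs (s : vert) (u : HD) (v : HC) : R :=
  \sum_(K in Ts s) mKs M K s *
    (2 * muK K * ddot (symm (gradB u K s)) (symm (gradT v K s))
     + lamK K * \tr (gradB u K s) * \tr (gradT v K s)).
Definition bD (u : HD) (v : HC) : R := \sum_s bDs s u v.
Definition aDs (s : vert) (u w : HD) : R :=
  \sum_(sg in Fs s) alpha s sg / mSs M sg s *
     \sum_(b in Gsub s sg) gp_w M b * dotv (jump u b) (jump w b).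
Definition energy_s (u : HD) (s : vert) : R :=
  \sum_(K in Ts s) mKs M K s *
    (2 * muK K * frob2 (symm (gradB u K s)) + lamK K * (\tr (gradB u K s)) ^+ 2).

(* the local extension Pi_{FV,s}: admissible set and minimizer property *)
Definition admissible (s : vert) (uT : HT) (w : HD) : Prop :=
  [/\ inHD w,
      (forall K, w.1 K = if K \in Ts s then uT K else 0),
      (forall K b, gp_vert M b != s -> w.2 K b = 0),
      (forall v : HC, inHC v -> (forall K, v.1 K = 0) ->
          (forall s' sg, s' != s -> v.2 s' sg = 0) -> bDs s w v = 0) &
      (forall K b, K \in Ts s -> inc K (gp_face M b) -> gp_vert M b = s ->
          w.2 K b = w.1 K + (gp_pt M b - xK M K) *m (gradB w K s)^T)].
Definition isPiFVs (s : vert) (uT : HT) (w : HD) : Prop :=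
  admissible s uT w /\
  forall w', admissible s uT w' -> aDs s w w <= aDs s w' w'.

Definition PiFV (PiFVs : vert -> HT -> HD) (uT : HT) : HD :=
  (uT, fun K b => (PiFVs (gp_vert M b) uT).2 K b).

(* int_{(K,s)} |c + (x - x_K) A|^2 dx                                         *)
Definition sub_l2 (K : cell) (s : vert) (c : vec) (A : mat) : R :=
  mKs M K s * nrm2 c + 2 * dotv c (mom1 M K s *m A)
  + \tr (A *m A^T *m mom2 M K s).
(* || Pi_{L2} u ||_{L2}^2 ;  Pi_{L2} u (x) = u_K + (x - x_K) (grad u)^T *)
Definition l2sq (u : HD) : R :=
  \sum_K \sum_(s in VK K) sub_l2 K s (u.1 K) (gradB u K s)^T.
(* || Pi_{L2} u - r ||^2 for the rigid motion r(x) = a + x W, W skew *)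
Definition l2rig (u : HD) (a : vec) (W : mat) : R :=
  \sum_K \sum_(s in VK K)
     sub_l2 K s (u.1 K - (a + xK M K *m W)) ((gradB u K s)^T - W).
Definition l2quot (u : HD) : R :=
  inf [set x | exists (a : vec) (W : mat), W^T = - W /\ x = l2rig u a W].
Definition normT2quot (u : HT) : R :=
  inf [set x | exists (a : vec) (W : mat), W^T = - W /\
                 x = normT2 (fun K => u K - (a + xK M K *m W))].

End Scheme.

From HB Require Import structures.
From mathcomp Require Import all_boot all_order all_algebra.
From mathcomp Require Import all_classical all_reals.
From mathcomp Require Import ring lra.
Import Order.TTheory GRing.Theory Num.Theory.
Set Implicit Arguments.
Unset Strict Implicit.
Local Open Scope ring_scope.

(* The local coercivity assumption, summed over the vertices, bounds
   [b_D(Pi_FV u, Pi_C Pi_FV u)] from below by [theta2 (2 mu_lo |eps(Pi_FV u)|^2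
   + J(Pi_FV u))], because [Pi_FV u] coincides with [Pi_FV,s u] around every
   vertex [s].  Conversely [|u|_T^2 <= d |Pi_FV u|_D^2]: [gamma_sigma u] is the
   [d_{K,sigma}^-1]-weighted mean of the neighbouring cell values, hence the best
   constant approximation of them, and every subcell is the union of the cones
   of apex [x_K] over its subfaces.  The constants [c_D], [c_K] and [c_L2] then
   bound [|Pi_FV u|_D^2] by the same two quantities, which yields [Theta].  In
   the pure Neumann case all these quantities are invariant under subtracting
   a rigid motion, with which [Pi_FV] commutes by uniqueness of the
   constrained minimizers, so the estimate passes to the infima defining the
   quotient norms. *)

Section Elementary.
Variables (R : realType) (d : nat).
Local Notation vec := 'rV[R]_d.
Local Notation mat := 'M[R]_d.

Lemma nrm2_ge0 (u : vec) : 0 <= nrm2 u.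
Proof. by apply: sumr_ge0 => i _; rewrite -expr2 sqr_ge0. Qed.

Lemma frob2_ge0 (A : mat) : 0 <= frob2 A.
Proof.
by apply: sumr_ge0 => i _; apply: sumr_ge0 => j _; rewrite -expr2 sqr_ge0.
Qed.

Lemma nrm2_subC (u v : vec) : nrm2 (u - v) = nrm2 (v - u).
Proof. by apply: eq_bigr => i _; rewrite !mxE; ring. Qed.

Lemma symmB (A B : mat) : symm (A - B) = symm A - symm B.
Proof. by apply/matrixP => i j; rewrite !mxE; ring. Qed.

Lemma tensBl (x y g : vec) : tens (x - y) g = tens x g - tens y g.
Proof. by rewrite /tens linearB /= mulmxBl. Qed.

Lemma symm_skew (W : mat) : W^T = - W -> symm W^T = 0.
Proof. by move=> HW; rewrite /symm trmxK HW addNr scaler0. Qed.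

Lemma mxtrace_skew (W : mat) : W^T = - W -> \tr W^T = 0.
Proof.
move=> HW; have trWN : \tr W = - \tr W by rewrite -{1}mxtrace_tr HW linearN.
by rewrite mxtrace_tr; lra.
Qed.

(* [sum_i c_i (w - x_i)^2 = S (w - g)^2 + sum_i c_i (g - x_i)^2] for the
   weighted mean [g]; no sign condition on the individual weights is needed. *)
Lemma weighted_mean_sqr_min (I : finType) (A : {set I}) (c x : I -> R) (w : R) :
  0 < \sum_(i in A) c i ->
  \sum_(i in A) c i * ((\sum_(j in A) c j)^-1 * \sum_(j in A) c j * x j - x i) ^+ 2
  <= \sum_(i in A) c i * (w - x i) ^+ 2.
Proof.
set S := \sum_(i in A) c i; set g := S^-1 * _ => HS.
have expand i : c i * (w - x i) ^+ 2 =
   c i * (w - g) ^+ 2 + 2 * (w - g) * (c i * g - c i * x i) + c i * (g - x i) ^+ 2.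
  by ring.
rewrite (eq_bigr _ (fun i _ => expand i)) !big_split /= -mulr_sumr -mulr_suml.
rewrite sumrB -mulr_suml.
have -> : S * g - \sum_(i in A) c i * x i = 0.
  by rewrite /g mulrA mulfV ?mul1r ?subrr // gt_eqF.
by rewrite mulr0 addr0 lerDr mulr_ge0 ?sqr_ge0 // ltW.
Qed.

Lemma weighted_mean_nrm2_min (I : finType) (A : {set I}) (c : I -> R)
    (x : I -> vec) (w : vec) :
  0 < \sum_(i in A) c i ->
  \sum_(i in A) c i * nrm2 ((\sum_(j in A) c j)^-1 *: \sum_(j in A) c j *: x j - x i)
  <= \sum_(i in A) c i * nrm2 (w - x i).
Proof.
move=> HS; rewrite /nrm2 /dotv.
under eq_bigr => i _ do rewrite mulr_sumr.
under [X in _ <= X]eq_bigr => i _ do rewrite mulr_sumr.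
rewrite exchange_big [X in _ <= X]exchange_big /=; apply: ler_sum => k _.
have := weighted_mean_sqr_min (fun i => x i 0 k) (w 0 k) HS.
have coord : \sum_(j in A) (c j *: x j) 0 k = \sum_(j in A) c j * x j 0 k.
  by apply: eq_bigr => j _; rewrite mxE.
by congr (_ <= _); apply: eq_bigr => i _; rewrite !mxE ?summxE ?coord expr2.
Qed.

End Elementary.

Section MeshFacts.
Variables (R : realType) (d : nat) (M : mesh R d).
Local Notation cell := (cell M).
Local Notation face := (face M).
Local Notation vert := (vert M).

Lemma in_FKs (K : cell) (s : vert) (sg : face) :
  (sg \in FKs K s) = inc K sg && (s \in fverts M sg).
Proof. by rewrite !inE. Qed.

Lemma in_Ts (s : vert) (K : cell) : (K \in Ts s) = (s \in VK K).
Proof. by rewrite inE. Qed.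

Lemma VK_FKs (K : cell) (s : vert) (sg : face) : sg \in FKs K s -> s \in VK K.
Proof. by rewrite in_FKs => /andP[HK Hs]; apply/bigcupP; exists sg; rewrite ?inE. Qed.

Lemma inc_fc1 (sg : face) : inc (fc1 M sg) sg.
Proof. by rewrite /inc !inE eqxx. Qed.

Lemma inc_fc2 (sg : face) : inc (fc2 M sg) sg.
Proof. by rewrite /inc !inE eqxx orbT. Qed.

Lemma Gsub_face (s : vert) (sg : face) (b : gpt M) : b \in Gsub s sg -> gp_face M b = sg.
Proof. by rewrite inE => /andP[/eqP]. Qed.

Lemma Gsub_vert (s : vert) (sg : face) (b : gpt M) : b \in Gsub s sg -> gp_vert M b = s.
Proof. by rewrite inE => /andP[_ /eqP]. Qed.

Lemma sum_FK (F : cell -> face -> R) :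
  \sum_K \sum_(sg in FK K) F K sg = \sum_sg \sum_(K in Tsig sg) F K sg.
Proof.
rewrite (exchange_big_dep xpredT) //=; apply: eq_bigr => sg _.
by apply: eq_bigl => K; rewrite inE.
Qed.

Lemma sum_VK_FKs (K : cell) (F : vert -> face -> R) :
  \sum_(s in VK K) \sum_(sg in FKs K s) F s sg =
  \sum_(sg in FK K) \sum_(s in fverts M sg) F s sg.
Proof.
rewrite (exchange_big_dep (fun sg => sg \in FK K)) => [|s sg _].
  2: by rewrite !inE => /andP[].
apply: eq_bigr => sg; rewrite inE => HK; apply: eq_bigl => s.
apply/andP/idP => [[_]|Hs]; first by rewrite !inE => /andP[].
have Hsg : sg \in FKs K s by rewrite !inE HK.
by rewrite (VK_FKs Hsg).
Qed.

Lemma sum_Ts (F : vert -> cell -> R) :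
  \sum_s \sum_(K in Ts s) F s K = \sum_K \sum_(s in VK K) F s K.
Proof.
rewrite (exchange_big_dep xpredT) //=; apply: eq_bigr => K _.
by apply: eq_bigl => s; rewrite inE.
Qed.

Hypothesis Hm : mesh_ok M.

Lemma mS_gt0 (sg : face) : 0 < mS M sg.
Proof. by case: Hm => _ [_ [_ [H _]]]. Qed.

Lemma mSs_gt0 (sg : face) (s : vert) : s \in fverts M sg -> 0 < mSs M sg s.
Proof. by case: Hm => _ [_ [_ [_ [H _]]]]; apply: H. Qed.

Lemma mKs_gt0 (K : cell) (s : vert) : s \in VK K -> 0 < mKs M K s.
Proof. by case: Hm => _ [_ [_ [_ [_ [H _]]]]]; apply: H. Qed.

Lemma dKS_gt0 (K : cell) (sg : face) : inc K sg -> 0 < dKS M K sg.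
Proof. by case: Hm => _ [_ [_ [_ [_ [_ [H _]]]]]] HK; case: (H K sg HK). Qed.

Lemma gp_w_gt0 (b : gpt M) : 0 < gp_w M b.
Proof. by case: Hm => _ [_ [_ [_ [_ [_ [_ [H _]]]]]]]; case: (H b). Qed.

Lemma sum_gp_w (sg : face) (s : vert) : s \in fverts M sg ->
  \sum_(b in Gsub s sg) gp_w M b = mSs M sg s.
Proof. by case: Hm => _ [_ [_ [_ [_ [_ [_ [_ [H _]]]]]]]] Hs; case: (H sg s Hs). Qed.

Lemma mS_sum (sg : face) : mS M sg = \sum_(s in fverts M sg) mSs M sg s.
Proof. by case: Hm => _ [_ [_ [_ [_ [_ [_ [_ [_ [H _]]]]]]]]]. Qed.

Lemma subcell_cone (K : cell) (s : vert) : s \in VK K ->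
  d%:R * mKs M K s = \sum_(sg in FKs K s) mSs M sg s * dKS M K sg.
Proof. by case: Hm => _ [_ [_ [_ [_ [_ [_ [_ [_ [_ [_ [H _]]]]]]]]]]]; apply: H. Qed.

Lemma sum_tens_gKS (K : cell) (s : vert) : s \in VK K ->
  \sum_(sg in FKs K s) tens (avgx s sg - xK M K) (gKS M K s sg) = 1%:M.
Proof. by case: Hm => _ [_ [_ [_ [_ [_ [_ [_ [_ [_ [_ [_ [_ H]]]]]]]]]]]]; apply: H. Qed.

Lemma jterm_ge0 (u : HD M) (s : vert) (sg : face) :
  s \in fverts M sg -> 0 <= jterm u s sg.
Proof.
move=> Hs; apply: mulr_ge0; first by rewrite invr_ge0 ltW ?mSs_gt0.
by apply: sumr_ge0 => b _; rewrite mulr_ge0 ?nrm2_ge0 ?ltW ?gp_w_gt0.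
Qed.

Lemma normT2_ge0 (u : HT M) : 0 <= normT2 u.
Proof.
apply: sumr_ge0 => K _; apply: sumr_ge0 => sg; rewrite inE => HK.
by rewrite mulr_ge0 ?nrm2_ge0 // divr_ge0 // ltW ?mS_gt0 ?dKS_gt0.
Qed.

Lemma sumEps2_ge0 (u : HD M) : 0 <= sumEps2 u.
Proof.
apply: sumr_ge0 => K _; apply: sumr_ge0 => s Hs.
by rewrite mulr_ge0 ?frob2_ge0 // ltW ?mKs_gt0.
Qed.

Lemma Jloc_ge0 (u : HD M) (s : vert) : 0 <= Jloc u s.
Proof.
apply: sumr_ge0 => K HK; apply: sumr_ge0 => sg; rewrite in_FKs => /andP[Hi Hs].
rewrite in_Ts in HK.
apply: mulr_ge0; last exact: jterm_ge0.
by rewrite mulr_ge0 ?invr_ge0 ?exprn_ge0 // ltW ?mKs_gt0 ?dKS_gt0.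
Qed.

Lemma Jfun_sum_Jloc (u : HD M) : Jfun u = \sum_s Jloc u s.
Proof. by rewrite /Jloc sum_Ts. Qed.

Lemma Jfun_ge0 (u : HD M) : 0 <= Jfun u.
Proof. by rewrite Jfun_sum_Jloc sumr_ge0 // => s _; rewrite Jloc_ge0. Qed.

End MeshFacts.

Section NormComparison.
Variables (R : realType) (d : nat) (M : mesh R d).
Hypothesis Hm : mesh_ok M.

Lemma subface_weight_le (K : cell M) (s : vert M) (sg : face M) : sg \in FKs K s ->
  mSs M sg s / dKS M K sg <= d%:R * (mKs M K s / dKS M K sg ^+ 2).
Proof.
move=> Hsg; have := Hsg; rewrite in_FKs => /andP[HK Hs].
have HdKS := dKS_gt0 Hm HK.
have cone : mSs M sg s * dKS M K sg <= d%:R * mKs M K s.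
  rewrite (subcell_cone Hm (VK_FKs Hsg)) (bigD1 sg) //= lerDl.
  apply: sumr_ge0 => sg' /andP[+ _]; rewrite in_FKs => /andP[HK' Hs'].
  by rewrite mulr_ge0 // ltW ?(mSs_gt0 Hm) ?(dKS_gt0 Hm).
have -> : mSs M sg s / dKS M K sg = mSs M sg s * dKS M K sg / dKS M K sg ^+ 2.
  by field; rewrite gt_eqF.
by rewrite mulrA ler_wpM2r // invr_ge0 exprn_ge0 // ltW.
Qed.

Lemma sum_subface_le_normD2 (u : HD M) :
  \sum_sg \sum_(K in Tsig sg) \sum_(s in fverts M sg)
     mSs M sg s / dKS M K sg * nrm2 (u.1 K - avgS u s sg) <= d%:R * normD2 u.
Proof.
rewrite /normD2 mulr_sumr -sum_FK; apply: ler_sum => K _.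
rewrite -sum_VK_FKs mulr_sumr; apply: ler_sum => s _.
rewrite mulr_sumr; apply: ler_sum => sg Hsg.
have := Hsg; rewrite in_FKs => /andP[HK Hs].
have weight := subface_weight_le Hsg.
have weight0 : 0 <= d%:R * (mKs M K s / dKS M K sg ^+ 2).
  by apply: le_trans weight; rewrite divr_ge0 // ltW ?(mSs_gt0 Hm) ?(dKS_gt0 Hm).
rewrite mulrA; apply: le_trans (ler_wpM2r (nrm2_ge0 _) weight) _.
by rewrite ler_wpM2l // lerDl (jterm_ge0 Hm).
Qed.

Lemma normT2_le_normD2 (u : HD M) : inHD u -> normT2 u.1 <= d%:R * normD2 u.
Proof.
move=> [_ u_dir]; apply: le_trans (sum_subface_le_normD2 u).
rewrite /normT2 sum_FK; apply: ler_sum => sg _; rewrite (mS_sum Hm).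
under eq_bigr => K _ do rewrite mulr_suml mulr_suml.
rewrite exchange_big [X in _ <= X]exchange_big /=; apply: ler_sum => s Hs.
under eq_bigr => K _ do rewrite -mulrA.
under [X in _ <= X]eq_bigr => K _ do rewrite -mulrA nrm2_subC.
rewrite -!mulr_sumr; apply: ler_wpM2l; first by rewrite ltW ?(mSs_gt0 Hm).
rewrite /gammaS; case Hdir: (fdir M sg).
  suff -> : avgS u s sg = 0 by [].
  rewrite /avgS big1 ?scaler0 // => b /Gsub_face Hb.
  by rewrite !u_dir ?Hb // addr0 !scaler0.
apply: weighted_mean_nrm2_min.
rewrite (bigD1 (fc1 M sg)) /=; last exact: inc_fc1.
apply: ltr_pwDl; first by rewrite invr_gt0 (dKS_gt0 Hm) ?inc_fc1.
by apply: sumr_ge0 => K /andP[HK _]; rewrite invr_ge0 ltW ?(dKS_gt0 Hm HK).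
Qed.

End NormComparison.

Section Locality.
Variables (R : realType) (d : nat) (M : mesh R d) (muK lamK : cell M -> R).
Variables (s : vert M) (w w' : HD M).
Hypothesis face_agree : forall K b, gp_vert M b = s -> w.2 K b = w'.2 K b.
Hypothesis cell_agree : forall K, K \in Ts s -> w.1 K = w'.1 K.

Lemma avgKS_local K sg : avgKS w K s sg = avgKS w' K s sg.
Proof.
by congr (_ *: _); apply: eq_bigr => b /Gsub_vert Hb; rewrite face_agree.
Qed.

Lemma avgS_local sg : avgS w s sg = avgS w' s sg.
Proof.
by congr (_ *: _); apply: eq_bigr => b /Gsub_vert Hb; rewrite !face_agree.
Qed.

Lemma jterm_local sg : jterm w s sg = jterm w' s sg.
Proof.
by congr (_ * _); apply: eq_bigr => b /Gsub_vert Hb; rewrite /jump !face_agree.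
Qed.

Lemma gradB_local K : K \in Ts s -> gradB w K s = gradB w' K s.
Proof. by move=> HK; apply: eq_bigr => sg _; rewrite avgKS_local cell_agree. Qed.

Lemma gradT_PiC_local K : K \in Ts s -> gradT (PiC w) K s = gradT (PiC w') K s.
Proof.
by move=> HK; congr (_ *: _); apply: eq_bigr => sg _; rewrite /= avgS_local cell_agree.
Qed.

Lemma bDs_local : bDs muK lamK s w (PiC w) = bDs muK lamK s w' (PiC w').
Proof. by apply: eq_bigr => K HK; rewrite gradB_local ?gradT_PiC_local. Qed.

Lemma energy_s_local : energy_s muK lamK w s = energy_s muK lamK w' s.
Proof. by apply: eq_bigr => K HK; rewrite gradB_local. Qed.

Lemma Jloc_local : Jloc w s = Jloc w' s.
Proof. by apply: eq_bigr => K _; apply: eq_bigr => sg _; rewrite jterm_local. Qed.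

End Locality.

Section Coercivity.
Variables (R : realType) (d : nat) (M : mesh R d).
Variables (mu_lo : R) (muK lamK : cell M -> R) (alpha : vert M -> face M -> R).
Variables (PiFVs : vert M -> HT M -> HD M) (theta2 : R) (theta2s : vert M -> R).
Hypothesis Hm : mesh_ok M.
Hypothesis mu_lo_ge0 : 0 <= mu_lo.
Hypothesis mu_lo_le : forall K, mu_lo <= muK K.
Hypothesis lamK_ge0 : forall K, 0 <= lamK K.
Hypothesis PiFVsP : forall s uT w, isPiFVs muK lamK alpha s uT w <-> w = PiFVs s uT.
Hypothesis theta2_ge0 : 0 <= theta2.
Hypothesis theta2_le : forall s, theta2 <= theta2s s.
Hypothesis local_coercivity : forall s uT,
  theta2s s * (energy_s muK lamK (PiFVs s uT) s + Jloc (PiFVs s uT) s)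
    <= bDs muK lamK s (PiFVs s uT) (PiC (PiFVs s uT)).

Lemma admissible_PiFVs s uT : admissible muK lamK s uT (PiFVs s uT).
Proof. by case: ((PiFVsP s uT (PiFVs s uT)).2 erefl). Qed.

Lemma inHD_PiFV uT : inHD (PiFV PiFVs uT).
Proof.
by split=> K b /=; case: (admissible_PiFVs (gp_vert M b) uT) => [[H1 H2] _ _ _ _];
  [apply: H1 | apply: H2].
Qed.

Lemma PiFV_agrees_PiFVs s uT :
  (forall K b, gp_vert M b = s -> (PiFV PiFVs uT).2 K b = (PiFVs s uT).2 K b) /\
  (forall K, K \in Ts s -> (PiFV PiFVs uT).1 K = (PiFVs s uT).1 K).
Proof.
split=> [K b /= -> //|K HK /=].
by case: (admissible_PiFVs s uT) => _ cells _ _ _; rewrite cells HK.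
Qed.

Lemma energy_s_ge0 (w : HD M) s : 0 <= energy_s muK lamK w s.
Proof.
apply: sumr_ge0 => K; rewrite in_Ts => Hs.
apply: mulr_ge0; first by rewrite ltW ?(mKs_gt0 Hm).
have muK_ge0 : 0 <= muK K := le_trans mu_lo_ge0 (mu_lo_le K).
apply: addr_ge0; first by rewrite !mulr_ge0 ?frob2_ge0.
by rewrite mulr_ge0 ?sqr_ge0.
Qed.

Lemma sumEps2_le_energy (w : HD M) :
  2 * mu_lo * sumEps2 w <= \sum_s energy_s muK lamK w s.
Proof.
rewrite /energy_s sum_Ts mulr_sumr; apply: ler_sum => K _.
rewrite mulr_sumr; apply: ler_sum => s Hs; rewrite mulrCA.
apply: ler_wpM2l; first by rewrite ltW ?(mKs_gt0 Hm).
have mu_le := ler_wpM2l (ler0n R 2) (mu_lo_le K).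
apply: le_trans (ler_wpM2r (frob2_ge0 _) mu_le) _.
by rewrite lerDl mulr_ge0 ?sqr_ge0.
Qed.

Lemma bD_PiFV_coercive uT :
  theta2 * (2 * mu_lo * sumEps2 (PiFV PiFVs uT) + Jfun (PiFV PiFVs uT))
    <= bD muK lamK (PiFV PiFVs uT) (PiC (PiFV PiFVs uT)).
Proof.
set w := PiFV PiFVs uT.
have by_vertex : 2 * mu_lo * sumEps2 w + Jfun w <= \sum_s (energy_s muK lamK w s + Jloc w s).
  by rewrite big_split /= (Jfun_sum_Jloc w) lerD2r sumEps2_le_energy.
apply: le_trans (ler_wpM2l theta2_ge0 by_vertex) _.
rewrite mulr_sumr; apply: ler_sum => s _.
have [faces cells] := PiFV_agrees_PiFVs s uT.
rewrite (bDs_local muK lamK faces cells) (energy_s_local muK lamK faces cells).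
rewrite (Jloc_local faces); apply: le_trans (local_coercivity s uT).
by rewrite ler_wpM2r ?addr_ge0 ?energy_s_ge0 ?(Jloc_ge0 Hm).
Qed.

End Coercivity.

Section RigidMotions.
Variables (R : realType) (d : nat) (M : mesh R d).
Local Notation vec := 'rV[R]_d.
Local Notation mat := 'M[R]_d.

Definition rigid (a : vec) (W : mat) (x : vec) : vec := a + x *m W.

Definition subHD (u v : HD M) : HD M :=
  (fun K => u.1 K - v.1 K, fun K b => u.2 K b - v.2 K b).

Definition subrigid (a : vec) (W : mat) (uT : HT M) : HT M :=
  fun K => uT K - rigid a W (xK M K).

Definition rigid_HD (a : vec) (W : mat) : HD M :=
  (fun K => rigid a W (xK M K),
   fun K b => if inc K (gp_face M b) then rigid a W (gp_pt M b) else 0).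

(* [rigid_HD] cut down to the unknowns on which [Pi_FV,s] may be nonzero. *)
Definition rigid_at (a : vec) (W : mat) (s : vert M) : HD M :=
  (fun K => if K \in Ts s then rigid a W (xK M K) else 0,
   fun K b => if inc K (gp_face M b) && (gp_vert M b == s)
              then rigid a W (gp_pt M b) else 0).

Lemma avgKS_sub (u v : HD M) K s sg :
  avgKS (subHD u v) K s sg = avgKS u K s sg - avgKS v K s sg.
Proof.
rewrite /avgKS -scalerBr -sumrB; congr (_ *: _).
by apply: eq_bigr => b _; rewrite scalerBr.
Qed.

Lemma gradB_sub (u v : HD M) K s : gradB (subHD u v) K s = gradB u K s - gradB v K s.
Proof.
rewrite /gradB -sumrB; apply: eq_bigr => sg _; rewrite avgKS_sub -tensBl.
by congr tens; apply/matrixP => i j; rewrite !mxE /=; ring.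
Qed.

Lemma jump_sub (u v : HD M) b : jump (subHD u v) b = jump u b - jump v b.
Proof. by apply/matrixP => i j; rewrite !mxE /=; ring. Qed.

Lemma jump_rigid_HD a W b : jump (rigid_HD a W) b = 0.
Proof. by rewrite /jump /= inc_fc1 inc_fc2 subrr. Qed.

Lemma jump_rigid_at a W s b : gp_vert M b = s -> jump (rigid_at a W s) b = 0.
Proof. by move=> Hb; rewrite /jump /= inc_fc1 inc_fc2 Hb eqxx subrr. Qed.

Hypothesis Hm : mesh_ok M.

(* [g_{K,sigma}^s] is the dual basis of the [<x>_{K,s}^sigma - x_K], so the
   reconstructed gradient is exact on affine fields. *)
Lemma gradB_rigid (u : HD M) a W K s : s \in VK K -> u.1 K = rigid a W (xK M K) ->
  (forall sg b, sg \in FKs K s -> b \in Gsub s sg -> u.2 K b = rigid a W (gp_pt M b)) ->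
  gradB u K s = W^T.
Proof.
move=> Hs u_cell u_face.
have affine sg : sg \in FKs K s ->
    tens (avgKS u K s sg - u.1 K) (gKS M K s sg) =
    W^T *m tens (avgx s sg - xK M K) (gKS M K s sg).
  move=> Hsg; have := Hsg; rewrite in_FKs => /andP[_ Hsf].
  have -> : avgKS u K s sg = a + avgx s sg *m W.
    rewrite /avgKS /avgx.
    under eq_bigr => b Hb do rewrite (u_face sg b Hsg Hb) /rigid scalerDr.
    rewrite big_split /= -scaler_suml (sum_gp_w Hm Hsf) scalerDr scalerA.
    rewrite mulVf ?gt_eqF ?(mSs_gt0 Hm) // scale1r -scalemxAl mulmx_suml.
    by congr (_ + _ *: _); apply: eq_bigr => b _; rewrite scalemxAl.
  rewrite u_cell /rigid /tens mulmxA -trmx_mul; congr (_^T *m _).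
  by rewrite mulmxBl; apply/matrixP => i j; rewrite !mxE; ring.
by rewrite /gradB (eq_bigr _ affine) -mulmx_sumr (sum_tens_gKS Hm Hs) mulmx1.
Qed.

Lemma gradB_rigid_HD a W K s : s \in VK K -> gradB (rigid_HD a W) K s = W^T.
Proof.
move=> Hs; apply: gradB_rigid => // sg b Hsg Hb /=.
by move: Hsg; rewrite in_FKs (Gsub_face Hb) => /andP[-> _].
Qed.

Lemma gradB_rigid_at a W s K : K \in Ts s -> gradB (rigid_at a W s) K s = W^T.
Proof.
move=> HK; apply: gradB_rigid; rewrite -?in_Ts /= ?HK // => sg b Hsg Hb.
move: Hsg; rewrite in_FKs (Gsub_face Hb) (Gsub_vert Hb) => /andP[-> _].
by rewrite eqxx.
Qed.

Lemma sumEps2_sub_rigid (w : HD M) a W : W^T = - W ->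
  sumEps2 (subHD w (rigid_HD a W)) = sumEps2 w.
Proof.
move=> W_skew; apply: eq_bigr => K _; apply: eq_bigr => s Hs.
by rewrite gradB_sub gradB_rigid_HD // symmB symm_skew // subr0.
Qed.

Lemma Jfun_sub_rigid (w : HD M) a W : Jfun (subHD w (rigid_HD a W)) = Jfun w.
Proof.
apply: eq_bigr => K _; apply: eq_bigr => s _; apply: eq_bigr => sg _.
congr (_ * (_ * _)); apply: eq_bigr => b _.
by rewrite jump_sub jump_rigid_HD subr0.
Qed.

Lemma l2sq_sub_rigid (w : HD M) a W : l2sq (subHD w (rigid_HD a W)) = l2rig w a W.
Proof.
apply: eq_bigr => K _; apply: eq_bigr => s Hs.
rewrite gradB_sub gradB_rigid_HD //; congr sub_l2.
by apply/matrixP => i j; rewrite !mxE.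
Qed.

End RigidMotions.

Arguments rigid_HD {R d M}.

Section RigidInvariance.
Variables (R : realType) (d : nat) (M : mesh R d).
Variables (muK lamK : cell M -> R) (alpha : vert M -> face M -> R).
Variable PiFVs : vert M -> HT M -> HD M.
Local Notation vec := 'rV[R]_d.
Local Notation mat := 'M[R]_d.
Hypothesis Hm : mesh_ok M.
Hypothesis neumann : forall sg, ~~ fdir M sg.
Hypothesis PiFVsP : forall s uT w, isPiFVs muK lamK alpha s uT w <-> w = PiFVs s uT.

Lemma admissible_sub_rigid (a : vec) (W : mat) s (uT : HT M) (w : HD M) : W^T = - W -> admissible muK lamK s uT w ->
  admissible muK lamK s (subrigid a W uT) (subHD w (rigid_at a W s)).
Proof.
move=> W_skew [[w_inc w_dir] w_cell w_vert w_orth w_affine]; split.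
- split=> K b /= Hb; last by move: (neumann (gp_face M b)); rewrite Hb.
  by rewrite w_inc // (negbTE Hb) subr0.
- by move=> K /=; rewrite w_cell; case: (K \in Ts s); rewrite ?subr0.
- by move=> K b Hb /=; rewrite w_vert // (negbTE Hb) andbF subr0.
- move=> v Hv v_cell v_faces; rewrite -(w_orth v Hv v_cell v_faces).
  apply: eq_bigr => K HK; rewrite gradB_sub gradB_rigid_at // symmB symm_skew //.
  by rewrite subr0 linearB /= mxtrace_skew // subr0.
move=> K b HK Hinc Hvb /=.
rewrite w_affine // gradB_sub gradB_rigid_at // HK Hinc Hvb eqxx /= /rigid.
rewrite linearB /= trmxK mulmxBr !mulmxBl.
by apply/matrixP => i j; rewrite !mxE; ring.
Qed.

Lemma aDs_sub_rigid (a : vec) (W : mat) s (w : HD M) :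
  aDs alpha s (subHD w (rigid_at a W s)) (subHD w (rigid_at a W s)) = aDs alpha s w w.
Proof.
apply: eq_bigr => sg _; congr (_ * _); apply: eq_bigr => b /Gsub_vert Hb.
by rewrite jump_sub jump_rigid_at // subr0.
Qed.

Lemma subrigidK (a : vec) (W : mat) (uT : HT M) : subrigid (- a) (- W) (subrigid a W uT) = uT.
Proof.
by apply: boolp.funext => K; apply/matrixP => i j; rewrite /subrigid /rigid mulmxN !mxE; ring.
Qed.

Lemma PiFVs_subrigid (a : vec) (W : mat) s (uT : HT M) : W^T = - W ->
  PiFVs s (subrigid a W uT) = subHD (PiFVs s uT) (rigid_at a W s).
Proof.
move=> W_skew; symmetry; apply/PiFVsP; split.
  exact/admissible_sub_rigid/(admissible_PiFVs PiFVsP).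
move=> w' Hw'; rewrite aDs_sub_rigid.
have NW_skew : (- W)^T = - - W by rewrite linearN /= W_skew.
have := admissible_sub_rigid (- a) NW_skew Hw'; rewrite subrigidK => Hw''.
have [_ PiFVs_min] := (PiFVsP s uT (PiFVs s uT)).2 erefl.
by apply: le_trans (PiFVs_min _ Hw'') _; rewrite aDs_sub_rigid.
Qed.

Lemma PiFV_subrigid (a : vec) (W : mat) (uT : HT M) : W^T = - W ->
  PiFV PiFVs (subrigid a W uT) = subHD (PiFV PiFVs uT) (rigid_HD a W).
Proof.
move=> W_skew; congr pair; apply: boolp.funext => K; apply: boolp.funext => b.
by rewrite PiFVs_subrigid //= eqxx andbT.
Qed.

End RigidInvariance.

Section Estimates.
Variables (R : realType) (d : nat) (M : mesh R d).
Variables (muK lamK : cell M -> R) (alpha : vert M -> face M -> R).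
Variables (PiFVs : vert M -> HT M -> HD M) (cK cD : R).
Hypothesis Hm : mesh_ok M.
Hypothesis PiFVsP : forall s uT w, isPiFVs muK lamK alpha s uT w <-> w = PiFVs s uT.
Hypotheses (d_gt0 : (0 < d)%N) (cK_gt0 : 0 < cK) (cD_gt0 : 0 < cD).
Hypothesis korn : forall uT : HT M,
  sumGrad2 (PiFV PiFVs uT)
    <= cK * (l2sq (PiFV PiFVs uT) + sumEps2 (PiFV PiFVs uT) + Jfun (PiFV PiFVs uT)).
Hypothesis normD2_le : forall u : HD M, inHD u -> normD2 u <= cD * (sumGrad2 u + Jfun u).

Lemma normT2_le_l2sq uT (w := PiFV PiFVs uT) :
  normT2 uT <= d%:R * cD * (cK * (l2sq w + sumEps2 w + Jfun w) + Jfun w).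
Proof.
have w_in := inHD_PiFV PiFVsP uT.
apply: le_trans (normT2_le_normD2 Hm w_in) _.
rewrite -mulrA ler_pM2l ?ltr0n //; apply: le_trans (normD2_le w_in) _.
by rewrite ler_pM2l // lerD2r korn.
Qed.

Hypothesis neumann : forall sg, ~~ fdir M sg.

(* Both quotient norms are infima over the same rigid motions, which
   [Pi_FV] transports to [rigid_HD]. *)
Lemma normT2quot_le_l2quot uT (w := PiFV PiFVs uT) :
  normT2quot uT <= d%:R * cD * (cK * (l2quot w + sumEps2 w + Jfun w) + Jfun w).
Proof.
set k := d%:R * cD * cK; set c := d%:R * cD * (cK * (sumEps2 w + Jfun w) + Jfun w).
have k_gt0 : 0 < k by rewrite !mulr_gt0 ?ltr0n.
have rigid_bound (a : 'rV[R]_d) (W : 'M[R]_d) : W^T = - W -> normT2quot uT <= k * l2rig w a W + c.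
  move=> W_skew; apply: (@le_trans _ _ (normT2 (subrigid a W uT))).
    apply: ge_inf; last by exists a, W.
    by exists 0 => _ [a' [W' [_ ->]]]; apply: normT2_ge0.
  apply: le_trans (normT2_le_l2sq (subrigid a W uT)) _.
  rewrite (PiFV_subrigid Hm neumann PiFVsP) // (sumEps2_sub_rigid Hm) // Jfun_sub_rigid.
  rewrite (l2sq_sub_rigid Hm).
  by rewrite le_eqVlt; apply/orP; left; apply/eqP; rewrite /k /c; ring.
suff : (normT2quot uT - c) / k <= l2quot w.
  rewrite ler_pdivrMr // => H; rewrite /k /c in H *; nra.
apply: lb_le_inf; first by exists (l2rig w 0 0), 0, 0; rewrite trmx0 oppr0.
by move=> y [a [W [W_skew ->]]]; rewrite ler_pdivrMr // mulrC lerBlDr rigid_bound.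
Qed.

End Estimates.

Lemma coercivity_constant_le (R : realType) (dd cD cK cL2 th mu T E J L B : R) :
  0 < dd -> 0 < cD -> 0 < cK -> 0 <= cL2 -> 0 <= th -> 0 <= mu -> 0 <= E -> 0 <= J ->
  T <= dd * cD * (cK * (L + E + J) + J) -> L <= cL2 * (E + J) ->
  th * (2 * mu * E + J) <= B ->
  th / (dd * cD * cK * (1 + cL2)) * Num.min (2 * mu) (1 / (1 + (cK * (1 + cL2))^-1)) * T
    <= B.
Proof.
move=> dd_gt0 cD_gt0 cK_gt0 cL2_ge0 th_ge0 mu_ge0 E_ge0 J_ge0 T_le L_le B_ge.
set C := cK * (1 + cL2); set m := Num.min _ _.
have C_gt0 : 0 < C by rewrite mulr_gt0 //; lra.
have m_le_mu : m <= 2 * mu by rewrite ge_min lexx.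
have CI_gt0 : 0 < 1 + C^-1 by rewrite addr_gt0 ?invr_gt0.
have m_le_C : m * (1 + C^-1) <= 1 by rewrite -ler_pdivlMr // ge_min lexx orbT.
have m_ge0 : 0 <= m by rewrite le_min mulr_ge0 //= divr_ge0 // ltW.
have T_le' : T <= dd * cD * (C * (E + J) + J).
  apply: le_trans T_le _; rewrite ler_pM2l ?mulr_gt0 // lerD2r /C -mulrA ler_pM2l //.
  nra.
have -> : dd * cD * cK * (1 + cL2) = dd * cD * C by rewrite /C !mulrA.
have ddC_gt0 : 0 < dd * cD * C by apply: mulr_gt0 => //; apply: mulr_gt0.
have coef_ge0 : 0 <= th / (dd * cD * C) * m.
  by apply: mulr_ge0 => //; apply: divr_ge0 => //; apply: ltW.
apply: le_trans (ler_wpM2l coef_ge0 T_le') _.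
have -> : th / (dd * cD * C) * m * (dd * cD * (C * (E + J) + J)) =
          th * (m * E + m * (1 + C^-1) * J).
  by field; rewrite !gt_eqF.
apply: le_trans B_ge; rewrite ler_wpM2l // lerD ?ler_wpM2r //.
by rewrite -[X in _ <= X]mul1r ler_wpM2r.
Qed.

Theorem theorem4p7 (R : realType) (d : nat) (M : mesh R d)
  (mu_lo mu_hi : R) (muK lamK : cell M -> R)
  (alpha_lo alpha_hi : R) (alpha : vert M -> face M -> R)
  (PiFVs : vert M -> HT M -> HD M)
  (theta2 : R) (theta2s : vert M -> R) (cK cD cL2 : R) :
  (d = 2%N \/ d = 3%N) ->
  mesh_ok M ->
  (* Lame parameters (cell averages) *)
  0 < mu_lo -> (forall K, mu_lo <= muK K <= mu_hi) -> (forall K, 0 < lamK K) ->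
  (* stabilization weights *)
  0 < alpha_lo ->
  (forall s sg, sg \in Fs s -> alpha_lo <= alpha s sg <= alpha_hi) ->
  (* Pi_{FV,s} u is the (existing and unique) constrained minimizer *)
  (forall s uT w, isPiFVs muK lamK alpha s uT w <-> w = PiFVs s uT) ->
  (* local coercivity assumption *)
  0 < theta2 -> (forall s, theta2 <= theta2s s) ->
  (forall s (uT : HT M),
     theta2s s * (energy_s muK lamK (PiFVs s uT) s + Jloc (PiFVs s uT) s)
       <= bDs muK lamK s (PiFVs s uT) (PiC (PiFVs s uT))) ->
  (* constants c_K (discrete Korn) and c_D *)
  0 < cK -> 0 < cD -> 0 <= cL2 ->
  (forall uT : HT M,
     sumGrad2 (PiFV PiFVs uT)
       <= cK * (l2sq (PiFV PiFVs uT) + sumEps2 (PiFV PiFVs uT) + Jfun (PiFV PiFVs uT))) ->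
  (forall u : HD M, inHD u -> normD2 u <= cD * (sumGrad2 u + Jfun u)) ->
  let Theta0 := theta2 / (d%:R * cD * cK * (1 + cL2)) *
                Num.min (2 * mu_lo) (1 / (1 + (cK * (1 + cL2))^-1)) in
  (* (a) Gamma_D of positive measure *)
  ((exists sg, fdir M sg) ->
   (forall uT : HT M,
      l2sq (PiFV PiFVs uT) <= cL2 * (sumEps2 (PiFV PiFVs uT) + Jfun (PiFV PiFVs uT))) ->
   exists Theta, Theta0 <= Theta /\
     forall uT : HT M,
       Theta * normT2 uT <= bD muK lamK (PiFV PiFVs uT) (PiC (PiFV PiFVs uT)))
  /\
  (* (b) Gamma_N = boundary of Omega : statement on H_T / R(Omega) *)
  ((forall sg, ~~ fdir M sg) ->
   (forall uT : HT M,
      l2quot (PiFV PiFVs uT) <= cL2 * (sumEps2 (PiFV PiFVs uT) + Jfun (PiFV PiFVs uT))) ->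
   exists Theta, Theta0 <= Theta /\
     forall uT : HT M,
       Theta * normT2quot uT <= bD muK lamK (PiFV PiFVs uT) (PiC (PiFV PiFVs uT))).
Proof.
move=> dim Hm mu_lo_gt0 mu_bounds lamK_gt0 _ _ PiFVsP theta2_gt0 theta2_le local_coer
  cK_gt0 cD_gt0 cL2_ge0 korn normD2_le Theta0.
have d_gt0 : (0 < d)%N by case: dim => ->.
have mu_lo_le K : mu_lo <= muK K by case/andP: (mu_bounds K).
have coercive uT := bD_PiFV_coercive Hm (ltW mu_lo_gt0) mu_lo_le (fun K => ltW (lamK_gt0 K))
  PiFVsP (ltW theta2_gt0) theta2_le local_coer uT.
have d_pos : 0 < d%:R :> R by rewrite ltr0n.
have Theta0_le := coercivity_constant_le d_pos cD_gt0 cK_gt0 cL2_ge0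
  (ltW theta2_gt0) (ltW mu_lo_gt0).
split=> [_ l2sq_le | neumann l2quot_le]; exists Theta0; split=> // uT.
  apply: Theta0_le (sumEps2_ge0 Hm _) (Jfun_ge0 Hm _) _ (l2sq_le uT) (coercive uT).
  exact: normT2_le_l2sq Hm PiFVsP d_gt0 cD_gt0 korn normD2_le uT.
apply: Theta0_le (sumEps2_ge0 Hm _) (Jfun_ge0 Hm _) _ (l2quot_le uT) (coercive uT).
exact: normT2quot_le_l2quot Hm PiFVsP d_gt0 cK_gt0 cD_gt0 korn normD2_le neumann uT.
Qed.
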